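(* Let $m\geq 2$ and $n\geq 2$ be integers, let $G_m$ be a graph of order $m$ and $K_n$ the complete graph of order $n$. Then $$\max\{rvc(G_m),\,n+1\}\leq rvcl(G_m\diamond K_n)\leq m+n+|E(G_m)|-1.$$
   Context: All graphs are finite, simple, connected and undirected; $d$ denotes graph distance. A rainbow vertex $k$-coloring of $G$ is a map $c:V(G)\to\{1,\dots,k\}$ such that every two vertices are joined by a path whose internal vertices all receive distinct colors; $rvc(G)$ is the least $k$ for which $G$ has one. For such $c$ let $R_i=c^{-1}(i)$; the rainbow code of $v$ is $(d(v,R_1),\dots,d(v,R_k))$ with $d(v,R_i)=\min_{x\in R_i}d(v,x)$. A locating rainbow $k$-coloring is a rainbow vertex $k$-coloring in which distinct vertices have distinct rainbow codes; $rvcl(G)$ is the least $k$ for which one exists. For graphs $G_m$ (order $m$) and $H_n$ (order $n$) on disjoint vertex sets, the edge corona $G_m\diamond H_n$ is obtained from one copy of $G_m$ and $|E(G_m)|$ vertex-disjoint copies of $H_n$, one per edge of $G_m$, by joining both end vertices of the $j$-th edge of $G_m$ to every vertex of the $j$-th copy of $H_n$. *)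

From mathcomp Require Import all_boot.
Set Implicit Arguments. Unset Strict Implicit. Unset Printing Implicit Defensive.

Definition simple_graph (T : finType) (e : rel T) := symmetric e /\ irreflexive e.
Definition connected_graph (T : finType) (e : rel T) := forall x y : T, connect e x y.

Fixpoint ball (T : finType) (e : rel T) (x : T) (k : nat) : {set T} :=
  match k with
  | 0 => [set x]
  | k'.+1 => ball e x k' :|: [set y | [exists z in ball e x k', e z y]]
  end.

(* graph distance d(x,y): least k with y in ball e x k (meaningful for connected graphs) *)
Definition gdist (T : finType) (e : rel T) (x y : T) : nat :=
  find (fun k => y \in ball e x k) (iota 0 #|T|).

Definition rainbow_connected (T : finType) (e : rel T) (k : nat) (c : T -> 'I_k)
  (u v : T) : Prop :=
  exists p : seq T, path e u (rcons p v) && uniq (map c p).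

Definition rainbow_vertex_coloring (T : finType) (e : rel T) (k : nat) (c : T -> 'I_k) :=
  forall u v : T, u != v -> rainbow_connected e c u v.

Definition dist_class (T : finType) (e : rel T) (k : nat) (c : T -> 'I_k) (v : T) (i : 'I_k) : nat :=
  \big[minn/#|T|]_(x | c x == i) gdist e v x.

Definition locating_rainbow_coloring (T : finType) (e : rel T) (k : nat) (c : T -> 'I_k) :=
  [/\ rainbow_vertex_coloring e c,
      (forall i : 'I_k, exists x, c x = i) &
      (forall u v : T, (forall i, dist_class e c u i = dist_class e c v i) -> u = v)].

Definition is_rvc (T : finType) (e : rel T) (r : nat) :=
  (exists c : T -> 'I_r, rainbow_vertex_coloring e c) /\
  (forall k (c : T -> 'I_k), rainbow_vertex_coloring e c -> r <= k).

Definition is_rvcl (T : finType) (e : rel T) (l : nat) :=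
  (exists c : T -> 'I_l, locating_rainbow_coloring e c) /\
  (forall k (c : T -> 'I_k), locating_rainbow_coloring e c -> l <= k).

Definition is_edge (T : finType) (e : rel T) (A : {set T}) : bool :=
  [exists x, exists y, e x y && (A == [set x; y])].
Definition gedge (T : finType) (e : rel T) := {A : {set T} | is_edge e A}.

Definition complete_rel (n : nat) : rel 'I_n := fun u v => u != v.

(* edge corona G <> H: vertices of G plus one copy of H per edge of G *)
Definition corona_vertex (T : finType) (e : rel T) (U : finType) : finType :=
  (T + (gedge e * U))%type.

Definition edge_corona (T : finType) (e : rel T) (U : finType) (h : rel U)
  : rel (corona_vertex e U) :=
  fun a b =>
    match a, b with
    | inl x, inl y => e x y
    | inl x, inr (A, _) => x \in val A
    | inr (A, _), inl x => x \in val A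
    | inr (A, u), inr (B, v) => (A == B) && h u v
    end.

From mathcomp Require Import all_boot zify.
From Stdlib Require Import Classical.
Set Implicit Arguments. Unset Strict Implicit. Unset Printing Implicit Defensive.

(* Write H for the edge corona G <> K_n.

   Projecting a path of H between two vertices of G onto G and
   removing loops yields a path of G whose internal vertices are among the old
   ones, so a rainbow colouring of H restricts to one of G.  The vertices of
   a copy of K_n are closed twins, hence have equal rainbow codes as soon as
   they have equal colours: a locating colouring is injective on each copy.
   With only n colours, an end vertex x of the corresponding edge would share
   its code with the copy vertex of its own colour, both being at distance 0
   from their own class and 1 from all others.

   Give the m vertices of G and the first vertex of each of the
   |E(G)| copies pairwise distinct colours, and the other n - 1 vertices of
   every copy the same n - 1 further colours.  The colouring is rainbow since
   it is injective on G, and locating since two equally coloured vertices in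
   the copies of distinct edges A and B are at distance 1 and at least 2,
   respectively, from the first vertex of the copy of A. *)

Lemma ex_least (P : nat -> Prop) k : P k -> exists l, P l /\ forall j, P j -> l <= j.
Proof.
elim/ltn_ind: k => k IH Pk.
case: (classic (exists2 j, j < k & P j)) => [[j ltjk Pj]|noj]; first exact: IH Pj.
exists k; split=> // j Pj; rewrite leqNgt; apply/negP => ltjk; apply: noj; by exists j.
Qed.

Lemma inr_eq (A B : eqType) (a b : B) : (@inr A B a == inr b) = (a == b).
Proof. by apply/eqP/eqP => [[]|->]. Qed.

Section Distance.
Variables (T : finType) (e : rel T).

Lemma ball_sub x i j : i <= j -> ball e x i \subset ball e x j.
Proof.
move/subnK <-; elim: (j - i) => [|d IH]; first exact: subxx.
by rewrite addSn; apply: subset_trans IH (subsetUl _ _).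
Qed.

Lemma ball1 x y : (y \in ball e x 1) = (y == x) || e x y.
Proof.
rewrite /= !inE; congr orb; apply/existsP/idP => [[z /andP [/set1P -> //]]|exy].
by exists x; rewrite inE eqxx.
Qed.

Lemma gdist_leE k x y : k < #|T| -> (gdist e x y <= k) = (y \in ball e x k).
Proof.
move=> ltkT; rewrite /gdist; apply/idP/idP => [le_dk|yk].
  have lt_dT := leq_ltn_trans le_dk ltkT.
  have found : has (fun j => y \in ball e x j) (iota 0 #|T|) by rewrite has_find size_iota.
  by have := nth_find 0 found; rewrite nth_iota // add0n; apply/subsetP/ball_sub.
by rewrite leqNgt; apply/negP => lt_kd; have := before_find 0 lt_kd; rewrite nth_iota // add0n yk.
Qed.

Lemma gdist_eq0 x y : (gdist e x y == 0) = (y == x).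
Proof. by rewrite -leqn0 gdist_leE ?inE //; apply/card_gt0P; exists x. Qed.

Lemma gdist_le1 x y : (gdist e x y <= 1) = (y == x) || e x y.
Proof.
case: (leqP #|T| 1) => [leT1|]; last by move=> lt1T; rewrite gdist_leE // ball1.
have -> : y = x.
  by apply/eqP; apply: contraTT leT1 => neq; rewrite -ltnNge; apply/card_gt1P; exists y, x.
by rewrite eqxx; have /eqP -> : gdist e x x == 0 by rewrite gdist_eq0.
Qed.

Definition closed_twins (a b : T) := forall y, ((y == a) || e a y) = ((y == b) || e b y).

Lemma ball_twins a b j : closed_twins a b -> 0 < j -> ball e a j = ball e b j.
Proof.
move=> twins; elim: j => // [[|j]] IH _; first by apply/setP => y; rewrite !ball1.
have ballS z i : ball e z i.+1 = ball e z i :|: [set y | [exists t in ball e z i, e t y]] by [].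
by rewrite [LHS]ballS [RHS]ballS IH.
Qed.

Variables (k : nat) (c : T -> 'I_k).

Lemma dist_class_le v x : dist_class e c v (c x) <= gdist e v x.
Proof.
rewrite /dist_class unlock; elim: (index_enum T) (mem_index_enum x) => //= a s IH.
rewrite inE => /orP [/eqP <-|xs]; first by rewrite eqxx geq_minl.
by case: (c a == c x); rewrite ?geq_min (IH xs) ?orbT.
Qed.

Lemma dist_class_self v : dist_class e c v (c v) = 0.
Proof.
apply/eqP; rewrite -leqn0; apply: leq_trans (dist_class_le v v) _.
by have /eqP -> : gdist e v v == 0 by rewrite gdist_eq0.
Qed.

Lemma dist_class_ge v i j :
  j <= #|T| -> (forall x, c x = i -> j <= gdist e v x) -> j <= dist_class e c v i.
Proof.
move=> leT lb; rewrite /dist_class; elim/big_ind: _ => // [a b|x /eqP]; last exact: lb.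
by rewrite leq_min => -> ->.
Qed.

Lemma dist_class_gt0 v i : c v != i -> 0 < dist_class e c v i.
Proof.
move=> neq; apply: dist_class_ge => [|x cx]; first by apply/card_gt0P; exists v.
by rewrite lt0n gdist_eq0; apply: contraNneq neq => <-; rewrite cx.
Qed.

Lemma dist_class_edge v x : e v x -> c v != c x -> dist_class e c v (c x) = 1.
Proof.
move=> evx neq; apply/eqP; rewrite eqn_leq dist_class_gt0 // andbT.
by apply: leq_trans (dist_class_le v x) _; rewrite gdist_le1 evx orbT.
Qed.

Lemma eq_dist_class_color u v :
  (forall i, dist_class e c u i = dist_class e c v i) -> c u = c v.
Proof.
move=> same; apply/eqP; apply: contraT => neq.
by have := dist_class_gt0 neq; rewrite same dist_class_self.
Qed.

Lemma dist_class_twins a b : closed_twins a b -> c a = c b ->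
  forall i, dist_class e c a i = dist_class e c b i.
Proof.
move=> twins cab i; case: (eqVneq i (c a)) => [->|neq]; first by rewrite {2}cab !dist_class_self.
apply: eq_bigr => x /eqP cx; apply: eq_find => -[|j]; last by rewrite (ball_twins twins).
rewrite /= !inE; case: (eqVneq x a) => [xa|_]; first by rewrite -cx xa eqxx in neq.
by case: (eqVneq x b) => // xb; rewrite -cx xb -cab eqxx in neq.
Qed.

End Distance.

Section Rainbow.
Variables (T : finType) (e : rel T).

Lemma connect_uniq_path x y :
  connect e x y -> exists q, [/\ path e x q, last x q = y & uniq (x :: q)].
Proof. by case/connectP => p /shortenP [q eq uq _] ->; exists q. Qed.

Lemma path_reflc_uniq x q :
  path (fun a b => (a == b) || e a b) x q -> uniq (x :: q) -> path e x q.
Proof.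
elim: q x => //= y q IH x /andP [exy pq] /andP [xq uq]; rewrite IH // andbT.
by case/orP: exy => // /eqP xy; rewrite xy mem_head in xq.
Qed.

Lemma rainbow_connected_sym k (c : T -> 'I_k) u v :
  symmetric e -> rainbow_connected e c u v -> rainbow_connected e c v u.
Proof.
move=> se [p /andP [pp up]]; exists (rev p); rewrite map_rev rev_uniq up andbT.
move: pp; rewrite -rev_path last_rcons belast_rcons rev_cons.
by rewrite (@eq_path _ _ e) // => a b; rewrite se.
Qed.

Lemma injective_rainbow k (c : T -> 'I_k) :
  connected_graph e -> injective c -> rainbow_vertex_coloring e c.
Proof.
move=> conn injc u v neq; have [q [pq lq uq]] := connect_uniq_path (conn u v).
case/lastP: q pq lq uq => [|q z]; first by move=> _ /= uv; rewrite uv eqxx in neq.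
rewrite last_rcons => pq <- uq; exists q; rewrite pq (map_inj_uniq injc).
by move: uq; rewrite /= rcons_uniq => /and3P [].
Qed.

End Rainbow.

Lemma inj_in_of_uniq_map (A B : eqType) (f : A -> B) s :
  uniq (map f s) -> {in s &, injective f}.
Proof.
elim: s => //= a s IH /andP [fa us] x y; rewrite !inE.
case/orP=> [/eqP ->|xs] /orP [/eqP ->|ys] // => [fay|fxa|]; last exact: IH.
- by rewrite fay map_f in fa.
- by rewrite -fxa map_f in fa.
Qed.

Section EdgeCorona.
Variables (T : finType) (e : rel T) (U : finType) (h : rel U).
Hypothesis se : symmetric e.
Local Notation V := (corona_vertex e U).
Local Notation E := (@edge_corona T e U h).

Lemma gedge_end (A : gedge e) : exists x, x \in val A.
Proof.
by case: A => A /= /existsP [x /existsP [y /andP [_ /eqP ->]]]; exists x; rewrite !inE eqxx.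
Qed.

Lemma gedge_ends_adj (A : gedge e) x y : x \in val A -> y \in val A -> (x == y) || e x y.
Proof.
case: A => A /= /existsP [a /existsP [b /andP [eab /eqP ->]]].
by rewrite !inE => /orP [] /eqP -> /orP [] /eqP ->; rewrite ?eqxx // ?(se b a) eab orbT.
Qed.

Lemma edge_corona_sym : symmetric h -> symmetric E.
Proof. by move=> sh [x|[A u]] [y|[B v]] //=; rewrite ?se // eq_sym sh. Qed.

Definition base_vertex (a : V) : option T := if a is inl x then Some x else None.

Definition lies_over (a : V) (x : T) : bool :=
  match a with inl y => y == x | inr (A, _) => x \in val A end.

Lemma path_base_vertices s a x : lies_over a x -> path E a s ->
  path (fun y z => (y == z) || e y z) x (pmap base_vertex s).
Proof.
elim: s a x => //= b s IH a x ax /andP [ab pbs].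
case: b ab pbs => [y|[B w]] ab pbs /=.
  rewrite (IH (inl y) y (eqxx y) pbs) andbT.
  case: a ax ab => [z /eqP <- /= ->|[A u] /= xA yA]; first by rewrite orbT.
  exact: gedge_ends_adj xA yA.
apply: (IH _ x _ pbs).
by case: a ax ab => [z /eqP <-|[A u] /= xA /andP [/eqP <- _]].
Qed.

Lemma mem_pmap_base_vertex x (p : seq V) : x \in pmap base_vertex p -> inl x \in p.
Proof.
elim: p => //= -[y|[B w]] p IH /=; last by move/IH; rewrite inE orbC => ->.
by rewrite !inE => /orP [/eqP -> | /IH ->]; rewrite ?eqxx ?orbT.
Qed.

Lemma edge_corona_path_base u v p : u != v -> path E (inl u) (rcons p (inl v)) ->
  exists q, [/\ path e u (rcons q v), uniq q & forall x, x \in q -> inl x \in p].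
Proof.
move=> neq /(path_base_vertices (a := inl u) (eqxx u)).
rewrite -cats1 pmap_cat cats1 => pp; move: (last_rcons u (pmap base_vertex p) v).
case/shortenP: pp => q' pq' uq' sub; case/lastP: q' pq' uq' sub => [|q z] pq' uq' sub.
  by move=> /= uv; rewrite uv eqxx in neq.
rewrite last_rcons => zv; subst z.
have [vq uq] : v \notin q /\ uniq q by move: uq'; rewrite /= rcons_uniq => /and3P [].
exists q; split=> // [|x xq]; first exact: path_reflc_uniq pq' uq'.
have /orP [/eqP xv|] : (x == v) || (x \in pmap base_vertex p).
  by rewrite -in_cons -mem_rcons sub // mem_rcons in_cons xq orbT.
- by rewrite -xv xq in vq.
- exact: mem_pmap_base_vertex.
Qed.

Lemma rainbow_restrict_inl k (c : V -> 'I_k) :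
  rainbow_vertex_coloring E c -> rainbow_vertex_coloring e (fun x => c (inl x)).
Proof.
move=> rbc u v neq; have [|p /andP [pp up]] := rbc (inl u) (inl v) _; first by [].
have [q [pq uq qp]] := edge_corona_path_base neq pp.
exists q; rewrite pq map_inj_in_uniq // => x y xq yq /=.
by move/(inj_in_of_uniq_map up (qp x xq) (qp y yq)) => [].
Qed.

End EdgeCorona.

Section CoronaComplete.
Variables (T : finType) (e : rel T) (n : nat).
Local Notation V := (corona_vertex e 'I_n).
Local Notation E := (@edge_corona T e 'I_n (@complete_rel n)).

Lemma closed_twins_copy A w1 w2 : closed_twins E (inr (A, w1)) (inr (A, w2)).
Proof.
move=> [x|[B w]] //=; rewrite /complete_rel.
rewrite !inr_eq !xpair_eqE; case: (eqVneq B A) => [BA|] //=; subst B.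
by rewrite (eq_sym w1) (eq_sym w2) !orbN.
Qed.

Lemma locating_copy_inj k (c : V -> 'I_k) A :
  locating_rainbow_coloring E c -> injective (fun w => c (inr (A, w))).
Proof.
by case=> _ _ loc w1 w2 cw; case: (loc _ _ (dist_class_twins (closed_twins_copy A w1 w2) cw)).
Qed.

Lemma locating_colors_gt k (c : V -> 'I_k) (A : gedge e) :
  locating_rainbow_coloring E c -> n < k.
Proof.
move=> lrc; have injA := locating_copy_inj (A := A) lrc; have [_ _ loc] := lrc.
have := leq_card _ injA; rewrite !card_ord leq_eqVlt => /orP [/eqP nk|//]; exfalso.
have ontoA i : exists w, c (inr (A, w)) = i.
  have le_kn : #|'I_k| <= #|'I_n| by rewrite !card_ord nk.
  by have /codomP [w ->] := inj_card_onto injA le_kn i; exists w.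
have [x xA] := gedge_end A; have [w0 cw0] := ontoA (c (inl x)).
suff : inl x = inr (A, w0) :> V by [].
apply: loc => i; case: (eqVneq (c (inl x)) i) => [<-|neq].
  by rewrite -{2}cw0 !dist_class_self.
case: (ontoA i) neq => wi <- neq.
have neq0 : c (inr (A, w0)) != c (inr (A, wi)) by rewrite cw0.
by rewrite !dist_class_edge //= eqxx; apply: contraNneq neq0 => ->.
Qed.

End CoronaComplete.

Section CoronaCompleteRainbow.
Variables (T : finType) (e : rel T) (n : nat).
Hypotheses (se : symmetric e) (conn : connected_graph e).
Local Notation V := (corona_vertex e 'I_n).
Local Notation E := (@edge_corona T e 'I_n (@complete_rel n)).
Variables (k : nat) (c : V -> 'I_k).
Hypothesis c_inj : injective (fun x => c (inl x)).

Lemma path_to_copy x B w :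
  exists q, path E (inl x) (rcons (map inl q) (inr (B, w))) && uniq (x :: q).
Proof.
have [y yB] := gedge_end B; have [q [pq lq uq]] := connect_uniq_path (conn x y).
by exists q; rewrite rcons_path path_map last_map pq lq uq andbT /=.
Qed.

Lemma rainbow_connected_inl x v : inl x != v -> rainbow_connected E c (inl x) v.
Proof.
case: v => [y|[B w]] neq.
  have [|q /andP [pq uq]] := injective_rainbow conn c_inj (u := x) (v := y).
    by apply: contraNneq neq => ->.
  by exists (map inl q); rewrite -map_rcons path_map -map_comp pq.
have [q /andP [pq /andP [_ uq]]] := path_to_copy x B w.
by exists (map inl q); rewrite pq -map_comp (map_inj_uniq c_inj).
Qed.

Lemma rainbow_connected_inr A w B w' : inr (A, w) != inr (B, w') :> V ->
  rainbow_connected E c (inr (A, w)) (inr (B, w')).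
Proof.
move=> neq; case: (eqVneq A B) => [AB|nAB].
  subst B; exists [::]; rewrite /= eqxx /complete_rel !andbT.
  by apply: contraNneq neq => ->.
have [x xA] := gedge_end A; have [q /andP [pq uq]] := path_to_copy x B w'.
exists (map inl (x :: q)); rewrite -map_comp (map_inj_uniq c_inj) uq andbT.
by rewrite [path _ _ _]/= xA.
Qed.

Lemma rainbow_of_inj_inl : rainbow_vertex_coloring E c.
Proof.
move=> [x|[A w]] v neq; first exact: rainbow_connected_inl.
case: v neq => [y|[B w']] neq; last exact: rainbow_connected_inr.
apply: rainbow_connected_sym.
  by apply: edge_corona_sym => // u u'; rewrite /complete_rel eq_sym.
by apply: rainbow_connected_inl; rewrite eq_sym.
Qed.

End CoronaCompleteRainbow.

Section UpperColoring.
Variables (T : finType) (e : rel T) (n : nat).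
Hypotheses (se : symmetric e) (conn : connected_graph e).
Variable A0 : gedge e.
Local Notation V := (corona_vertex e 'I_n.+1).
Local Notation E := (@edge_corona T e 'I_n.+1 (@complete_rel n.+1)).

Definition corona_color (a : V) : 'I_(#|T| + #|{: gedge e}| + n) :=
  match a with
  | inl x => lshift n (lshift _ (enum_rank x))
  | inr (A, w) =>
      if unlift ord0 w is Some j then rshift _ j else lshift n (rshift #|T| (enum_rank A))
  end.

Lemma corona_color_inl_inj : injective (fun x => corona_color (inl x)).
Proof. by move=> x y /lshift_inj /lshift_inj /enum_rank_inj. Qed.

Lemma corona_color_onto i : exists a, corona_color a = i.
Proof.
case: (split_ordP i) => [i' ->|j ->]; last by exists (inr (A0, lift ord0 j)); rewrite /= liftK.
case: (split_ordP i') => [x ->|A ->].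
  by exists (inl (enum_val x)); rewrite /= enum_valK.
by exists (inr (enum_val A, ord0)); rewrite /= unlift_none enum_valK.
Qed.

Lemma corona_color_eq a b : corona_color a = corona_color b ->
  a = b \/ exists A B j, a = inr (A, lift ord0 j) /\ b = inr (B, lift ord0 j).
Proof.
case: a b => [x|[A w]] [y|[B w']] /=.
- by move/lshift_inj/lshift_inj/enum_rank_inj ->; left.
- by case: unliftP => [j|] -> /= /eqP; rewrite ?eq_lshift ?eq_lrshift.
- by case: unliftP => [j|] -> /= /eqP; rewrite ?eq_lshift ?eq_rlshift.
case: unliftP => [j|] ->; case: unliftP => [j'|] -> /=.
- by move/rshift_inj ->; right; exists A, B, j'.
- by move/eqP; rewrite eq_rlshift.
- by move/eqP; rewrite eq_lrshift.
- by move/lshift_inj/rshift_inj/enum_rank_inj ->; left.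
Qed.

Lemma corona_color_root A z :
  corona_color z = corona_color (inr (A, ord0)) -> z = inr (A, ord0).
Proof. by case/corona_color_eq => // -[B [C [j [_ [_ /eqP]]]]]. Qed.

Lemma dist_class_root_near A w :
  dist_class E corona_color (inr (A, w)) (corona_color (inr (A, ord0))) <= 1.
Proof.
apply: leq_trans (dist_class_le _ _ _ _) _; rewrite gdist_le1 /= eqxx /complete_rel.
case: (eqVneq w ord0) => [->|nw0]; first by rewrite inr_eq eqxx.
by apply/orP; right.
Qed.

Lemma dist_class_root_far A B w : A != B ->
  1 < dist_class E corona_color (inr (B, w)) (corona_color (inr (A, ord0))).
Proof.
move=> nAB; have neq : inr (A, ord0) != inr (B, w) :> V.
  by rewrite inr_eq xpair_eqE (negbTE nAB).
apply: dist_class_ge => [|z /corona_color_root ->].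
  by apply/card_gt1P; exists (inr (A, ord0)), (inr (B, w)).
by rewrite ltnNge gdist_le1 negb_or neq /= eq_sym (negbTE nAB).
Qed.

Lemma corona_color_locating : locating_rainbow_coloring E corona_color.
Proof.
split; [exact: (rainbow_of_inj_inl se conn corona_color_inl_inj) | exact: corona_color_onto |].
move=> u v same; case/corona_color_eq: (eq_dist_class_color same) => // -[A [B [j [uA vB]]]].
subst u v; case: (eqVneq A B) => [-> //|nAB].
by have := dist_class_root_far (lift ord0 j) nAB; rewrite -same ltnNge dist_class_root_near.
Qed.

End UpperColoring.

Lemma least_coloring (V : finType) (P : forall k, (V -> 'I_k) -> Prop) k (c : V -> 'I_k) :
  P k c ->
  exists2 l, (exists c : V -> 'I_l, P l c) /\ (forall k (c : V -> 'I_k), P k c -> l <= k)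
           & l <= k.
Proof.
move=> Pc; have [l [[cl Pl] l_min]] := ex_least (P := fun k => exists c, P k c) (ex_intro _ c Pc).
exists l; last by apply: l_min; exists c.
by split=> [|k' c' Pc']; [exists cl | apply: l_min; exists c'].
Qed.

Lemma gedge_card_gt0 (T : finType) (e : rel T) :
  connected_graph e -> 1 < #|T| -> 0 < #|{: gedge e}|.
Proof.
move=> conn /card_gt1P [x [y [_ _ nxy]]].
case/connectP: (conn x y) => -[|z p] /=; first by move=> _ yx; rewrite yx eqxx in nxy.
case/andP=> exz _ _; apply/card_gt0P.
have xz_edge : is_edge e [set x; z].
  by apply/existsP; exists x; apply/existsP; exists z; rewrite exz eqxx.
by exists (exist (is_edge e) _ xz_edge).
Qed.

Theorem theorem3 (m n : nat) (T : finType) (e : rel T) :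
  2 <= m -> 2 <= n -> #|T| = m ->
  simple_graph e -> connected_graph e ->
  exists r l : nat,
    [/\ is_rvc e r,
        is_rvcl (@edge_corona T e (ordinal n) (@complete_rel n)) l,
        maxn r n.+1 <= l &
        l <= m + n + #|{: gedge e}| - 1].
Proof.
move=> m2 n2 cardT [se _] conn.
have /card_gt0P [A0 _] : 0 < #|{: gedge e}| by apply: gedge_card_gt0; rewrite ?cardT.
case: n n2 => // n _.
have [r rvc_r _] := least_coloring (P := fun k (c : T -> 'I_k) => rainbow_vertex_coloring e c)
  (injective_rainbow conn (@enum_rank_inj T)).
have [l rvcl_l le_l] := least_coloring (P := fun k c => locating_rainbow_coloring _ c)
  (corona_color_locating n se conn A0).
have [[c lrc] _] := rvcl_l; have [rbc _ _] := lrc.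
exists r, l; split=> //.
- rewrite geq_max (locating_colors_gt A0 lrc) andbT.
  exact: rvc_r.2 _ _ (rainbow_restrict_inl se rbc).
- by move: le_l; rewrite cardT; lia.
Qed.
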